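(* Let $\mathcal{X}=\{1,\ldots,n\}$, let $p=(p(1),\ldots,p(n))$ be a probability vector with $p(1)\geq\cdots\geq p(n)>0$ (the prior of $X$), and let $k<n$ be a positive integer. Let $j^*:=\min\{j:1\leq j\leq k,\ p(j)\leq \sum_{i=j}^n p(i)/(k-j+1)\}$ and $\pi=(\pi_1,\ldots,\pi_k)$ with $\pi_l=p(l)$ for $l\leq j^*-1$ and $\pi_l=\sum_{i=j^*}^n p(i)/(k-j^*+1)$ for $j^*\leq l\leq k$. Let $\mathcal{M}^*$ be the family of all $M\subseteq\mathcal{X}$ with $|M|=k$ and $\{1,\ldots,j^*-1\}\subseteq M$. Then the system $\sum_{M\in\mathcal{M}^*:\,i\in M}v_M=p(i)$ for $i=j^*,\ldots,n$, $v_M\geq0$ for $M\in\mathcal{M}^*$, has a solution, and for any solution $v$ the channel with outputs $\{y_M:M\in\mathcal{M}^*\}$ given by $p(y_M\mid i)=v_M/p(i)$ for $i\in\{j^*,\ldots,n\}\cap M$, $p(y_M\mid i)=v_M(k-j^*+1)/\sum_{j=j^*}^np(j)$ for $i\in\{1,\ldots,j^*-1\}$, and $p(y_M\mid i)=0$ otherwise, is a feasible channel satisfying $H(X\mid Y)=H(\pi)$ for every generalised entropy $(\eta,F)$.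
   Context: Generalised entropy: a pair $(\eta,F)$ where $F$ is a bounded real-valued function on probability vectors of every finite length that is symmetric (unchanged by permuting entries) and expansible (unchanged by appending zero entries), and $\eta$ is a real function, such that either $\eta$ is increasing and $F$ concave, or $\eta$ is decreasing and $F$ convex. $H(q)=\eta(F(q))$ and $H(X\mid Y)=\eta\big(\sum_{y:\,p(y)>0}p(y)F(p_{X\mid y})\big)$ with $p_{X\mid y}=(p(x\mid y))_{x\in\mathcal{X}}$. A channel is a discrete output set $\mathcal{Y}$ with conditional probabilities $p(y\mid x)\geq0$, $\sum_y p(y\mid x)=1$; $Y$ is its output when the input is $X\sim p$, with $p(y)=\sum_x p(x)p(y\mid x)$ and $p(x\mid y)=p(x)p(y\mid x)/p(y)$. The pre-image of $y$ is $\{x:p(y\mid x)>0\}$; the channel is feasible if every pre-image has at most $k$ elements. *)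

From HB Require Import structures.
From mathcomp Require Import all_boot all_order all_algebra.
From mathcomp Require Import reals.
Set Implicit Arguments. Unset Strict Implicit. Unset Printing Implicit Defensive.
Import Order.TTheory GRing.Theory Num.Theory.
Local Open Scope ring_scope.

Section GenEntropy.
Variable R : realType.

Definition probvec (s : seq R) : Prop :=
  (forall x, x \in s -> 0 <= x) /\ \sum_(x <- s) x = 1.

Definition mix (l : R) (s t : seq R) : seq R :=
  [seq l * a.1 + (1 - l) * a.2 | a <- zip s t].

Definition concave_pv (F : seq R -> R) : Prop :=
  forall s t (l : R), probvec s -> probvec t -> size s = size t ->
    0 <= l <= 1 -> l * F s + (1 - l) * F t <= F (mix l s t).

Definition convex_pv (F : seq R -> R) : Prop :=
  forall s t (l : R), probvec s -> probvec t -> size s = size t ->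
    0 <= l <= 1 -> F (mix l s t) <= l * F s + (1 - l) * F t.

Definition increasing_fun (eta : R -> R) : Prop :=
  forall x y, x <= y -> eta x <= eta y.
Definition decreasing_fun (eta : R -> R) : Prop :=
  forall x y, x <= y -> eta y <= eta x.

(** generalised entropy (eta, F); F only matters on probability vectors *)
Definition gen_entropy (eta : R -> R) (F : seq R -> R) : Prop :=
  [/\ exists B : R, forall s, probvec s -> `|F s| <= B,
      (forall s t, probvec s -> perm_eq s t -> F s = F t),
      (forall s m, probvec s -> F (s ++ nseq m 0) = F s) &
      (increasing_fun eta /\ concave_pv F) \/ (decreasing_fun eta /\ convex_pv F)].

Definition entropy (eta : R -> R) (F : seq R -> R) (q : seq R) : R := eta (F q).

(** channels with input ordinals and finite output set Y; W y x = p(y | x) *)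
Definition is_channel (n : nat) (Y : finType) (W : Y -> 'I_n -> R) : Prop :=
  (forall y x, 0 <= W y x) /\ (forall x, \sum_(y : Y) W y x = 1).

Definition preimage (n : nat) (Y : finType) (W : Y -> 'I_n -> R) (y : Y)
  : {set 'I_n} := [set x | 0 < W y x].

Definition feasible (k n : nat) (Y : finType) (W : Y -> 'I_n -> R) : Prop :=
  forall y, (#|preimage W y| <= k)%N.

Definition out_prob (n : nat) (Y : finType) (p : 'I_n -> R) (W : Y -> 'I_n -> R)
  (y : Y) : R := \sum_(x : 'I_n) p x * W y x.

Definition posterior (n : nat) (Y : finType) (p : 'I_n -> R) (W : Y -> 'I_n -> R)
  (y : Y) : seq R := [seq p x * W y x / out_prob p W y | x <- enum 'I_n].

Definition cond_entropy (eta : R -> R) (F : seq R -> R) (n : nat) (Y : finType)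
  (p : 'I_n -> R) (W : Y -> 'I_n -> R) : R :=
  eta (\sum_(y : Y | 0 < out_prob p W y) out_prob p W y * F (posterior p W y)).

(** ---- Objects of the lemma.  Indices are 0-based: paper element i is the
   ordinal i-1. ---- *)

Definition tailsum (n : nat) (p : 'I_n -> R) (j : nat) : R :=
  \sum_(i < n | (j <= i)%N) p i.

(** the defining condition of jstar, in 0-based form: paper j = j0 + 1,
    p(j) <= sum_{i=j}^n p(i) / (k - j + 1) *)
Definition jcond (n k : nat) (p : 'I_n -> R) (j : 'I_n) : bool :=
  (j < k)%N && (p j <= tailsum p j / (k - j)%:R).

(** jstar - 1 (0-based jstar): the least 0-based index j < k satisfying jcond
    (enum of ordinals lists 0,...,n-1 in order, so the position found is the value) *)
Definition jstar0 (n k : nat) (p : 'I_n -> R) : nat :=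
  find (jcond k p) (enum 'I_n).

Definition pivec (n k : nat) (p : 'I_n -> R) : seq R :=
  let js := jstar0 k p in
  map (fun i : 'I_n => if (i < js)%N then p i else tailsum p js / (k - js)%:R)
      (filter (fun i : 'I_n => (i < k)%N) (enum 'I_n)).

Definition Mstar (n k : nat) (p : 'I_n -> R) : {set {set 'I_n}} :=
  [set M : {set 'I_n} | (#|M| == k) && ([set i : 'I_n | (i < jstar0 k p)%N] \subset M)].

Definition lemma2_solution (n k : nat) (p : 'I_n -> R) (v : {set 'I_n} -> R) : Prop :=
  (forall i : 'I_n, (jstar0 k p <= i)%N ->
     \sum_(M in Mstar k p | i \in M) v M = p i) /\
  (forall M, M \in Mstar k p -> 0 <= v M).

Definition Mout (n k : nat) (p : 'I_n -> R) : finType := {M : {set 'I_n} | M \in Mstar k p}.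

Definition lemma2_channel (n k : nat) (p : 'I_n -> R) (v : {set 'I_n} -> R)
  (y : Mout k p) (i : 'I_n) : R :=
  let js := jstar0 k p in
  let M := val y in
  if (js <= i)%N then (if i \in M then v M / p i else 0)
  else v M * (k - js)%:R / tailsum p js.

End GenEntropy.
Arguments lemma2_channel {R n} k p v y i.

From mathcomp Require Import all_boot all_order all_algebra.
From mathcomp Require Import reals.
From mathcomp Require Import ring lra zify.
Import Order.TTheory GRing.Theory Num.Theory.

(* Write J for j^* and a := (p(J) + ... + p(n)) / (k - J + 1) for the common tail value of
   pi.  The choice of J gives p(i) <= a for i >= J, so x_i := 1 (i < J), x_i := p(i) / a
   (i >= J) lies in the hypersimplex {x in [0,1]^n | sum_i x_i = k}.  Pipage rounding (shift
   mass between two fractional coordinates, in either direction, until one of them becomes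
   0 or 1) writes x as a mixture D of indicators of k-sets; these contain {1,...,J-1}, and
   v_M := a D(M) solves the system.
   For any solution, double counting gives sum_M v_M = a, so p(y_M) = v_M / a and the
   posterior given y_M is p on {1,...,J-1}, a on the k - J + 1 other elements of M and 0
   elsewhere: a permutation of pi padded with n - k zeros.  Symmetry and expansibility of F then give H(X|Y) = eta (F pi) = H(pi). *)

Set Implicit Arguments. Unset Strict Implicit. Unset Printing Implicit Defensive.
Local Open Scope ring_scope.

Lemma card_ord_lt n j : (j <= n)%N -> #|[set i : 'I_n | (i < j)%N]| = j.
Proof.
move=> jn; rewrite -sum1_card (eq_bigl (fun i : 'I_n => (i < j)%N)) => [|i]; last by rewrite inE.
by rewrite (big_ord_narrow jn) /= sum1_card card_ord.
Qed.

Lemma perm_enum_setID (T : finType) (A B : {set T}) :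
  perm_eq (enum A) (enum (A :&: B) ++ enum (A :\: B)).
Proof.
rewrite -(perm_filterC (mem B) (enum A)) perm_sym setDE.
apply: perm_cat; first exact: enum_setI.
by rewrite (eq_filter (a2 := mem (~: B))) ?enum_setI // => i; rewrite !inE.
Qed.

Lemma perm_enum_setC (T : finType) (A : {set T}) :
  perm_eq (enum T) (enum A ++ enum (~: A)).
Proof. by have := perm_enum_setID [set: T] A; rewrite setTI setTD enum_setT enumT. Qed.

Lemma map_const_in (T : eqType) (U : Type) (f : T -> U) (c : U) (s : seq T) :
  {in s, forall x, f x = c} -> map f s = nseq (size s) c.
Proof. by move/eq_in_map ->; elim: s => //= x s ->. Qed.

Lemma probvec_cat_nseq0 (R : realType) (s : seq R) j :
  probvec s -> probvec (s ++ nseq j 0).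
Proof.
move=> [s0 s1]; split; last by rewrite big_cat /= big_nseq iter_addr_0 mul0rn addr0.
by move=> x; rewrite mem_cat mem_nseq => /orP[/s0 //|/andP[_ /eqP ->]].
Qed.

Section InclusionLaw.
Variables (R : realFieldType) (T : finType).
Implicit Types (x y z : T -> R) (D : {set T} -> R).

Definition inclusion_law (m : nat) x D : Prop :=
  [/\ forall S, 0 <= D S, \sum_S D S = 1,
      forall i, \sum_(S : {set T} | i \in S) D S = x i
    & forall S : {set T}, D S != 0 -> #|S| = m].

Lemma inclusion_law_mix m x y z Dy Dz (q : R) : 0 <= q <= 1 ->
  (forall i, x i = q * y i + (1 - q) * z i) ->
  inclusion_law m y Dy -> inclusion_law m z Dz ->
  inclusion_law m x (fun S => q * Dy S + (1 - q) * Dz S).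
Proof.
move=> /andP[q0 q1] xE [Dy0 Dy1 Dyx Dym] [Dz0 Dz1 Dzx Dzm]; split.
- by move=> S; rewrite addr_ge0 ?mulr_ge0 ?subr_ge0.
- by rewrite big_split -!mulr_sumr Dy1 Dz1 /=; ring.
- by move=> i; rewrite big_split -!mulr_sumr Dyx Dzx xE.
- move=> S; have [DyS0|] := eqVneq (Dy S) 0; last by move=> /Dym.
  by rewrite DyS0 mulr0 add0r mulf_eq0 negb_or => /andP[_ /Dzm].
Qed.

Lemma inclusion_law_support m x D i S : inclusion_law m x D -> x i = 1 ->
  D S != 0 -> i \in S.
Proof.
move=> [D0 D1 Dx _] xi1; apply: contraR => iS.
have out0 : \sum_(S : {set T} | i \notin S) D S = 0.
  by move: D1; rewrite (bigID (fun S : {set T} => i \in S)) /= Dx xi1; lra.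
by rewrite (psumr_eq0P (fun S _ => D0 S) out0).
Qed.

Definition fractional x : {set T} := [set i | 0 < x i < 1].

Lemma nonfractionalE x i : 0 <= x i <= 1 -> i \notin fractional x ->
  x i = (x i == 1)%:R.
Proof.
rewrite inE negb_and -!leNgt => /andP[x0 x1] /orP[x_le0|x_ge1].
- have -> : x i = 0 by apply/le_anti; rewrite x_le0 x0.
  by rewrite eq_sym oner_eq0.
- have -> : x i = 1 by apply/le_anti; rewrite x1 x_ge1.
  by rewrite eqxx.
Qed.

Lemma inclusion_law_boolean m x : (forall i, 0 <= x i <= 1) ->
  fractional x = set0 -> \sum_i x i = m%:R ->
  inclusion_law m x (fun S => (S == [set i | x i == 1])%:R).
Proof.
move=> x01 frac0 xm; set S1 := [set i | x i == 1].
have xE i : x i = (i \in S1)%:R by rewrite inE -nonfractionalE ?frac0 ?inE.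
split.
- by move=> S; rewrite ler0n.
- by rewrite (bigD1 S1) //= eqxx big1 ?addr0 // => S /negbTE ->.
- move=> i; rewrite big_mkcond (bigD1 S1) //= eqxx big1 => [|S /negbTE ->].
    by rewrite addr0 xE; case: (i \in S1).
  by rewrite if_same.
- move=> S; rewrite pnatr_eq0 eqb0 negbK => /eqP ->; apply/eqP.
  rewrite -(eqr_nat R) -xm (eq_bigr _ (fun i _ => xE i)) -sum1_card natr_sum.
  by rewrite big_mkcond /=; apply/eqP/eq_bigr => i _; case: (i \in S1).
Qed.

Lemma fractional_card_neq1 m x : (forall i, 0 <= x i <= 1) ->
  \sum_i x i = m%:R -> #|fractional x| != 1%N.
Proof.
move=> x01 xm; apply/negP => /cards1P[a fa].
have /[!inE] /andP[xa0 xa1] : a \in fractional x by rewrite fa set11.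
have xiE i : i != a -> x i = (x i == 1)%:R.
  by move=> ia; apply: nonfractionalE; rewrite ?fa ?inE.
pose c := (\sum_(i | i != a) (x i == 1%R : nat))%N.
have xaE : x a = m%:R - c%:R.
  by rewrite -xm (bigD1 a) //= /c natr_sum (eq_bigr _ xiE) addrK.
rewrite xaE subr_gt0 ltr_nat in xa0.
rewrite xaE ltrBlDr ?nat1r ?natr1 ltr_nat in xa1.
lia.
Qed.

Definition transfer x (a b : T) (t : R) : T -> R :=
  fun i => if i == a then x a - t else if i == b then x b + t else x i.

Lemma sum_transfer x a b t : a != b -> \sum_i transfer x a b t i = \sum_i x i.
Proof.
move=> ab; have ba : b != a by rewrite eq_sym.
have split_ab (f : T -> R) :
    \sum_i f i = f a + f b + \sum_(i | (i != a) && (i != b)) f i.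
  by rewrite (bigD1 a) // (bigD1 b) //= addrA.
rewrite !split_ab /transfer eqxx (negbTE ba) eqxx.
rewrite (eq_bigr x) => [|i /andP[/negbTE -> /negbTE ->]] //; ring.
Qed.

Lemma transfer_mix x a b t u : a != b -> 0 < t -> 0 < u ->
  forall i, x i = u / (t + u) * transfer x a b t i
                  + (1 - u / (t + u)) * transfer x b a u i.
Proof.
move=> ab t0 u0 i; have tu : t + u != 0 by rewrite gt_eqF ?addr_gt0.
rewrite /transfer; case: eqVneq => [->|_]; last case: eqVneq => [->|_].
- by rewrite (negbTE ab); field.
- by field.
- by field.
Qed.

Lemma fractional_transfer x a b t : a \in fractional x -> b \in fractional x ->
  fractional (transfer x a b t) \subset fractional x.
Proof.
move=> fa fb; apply/subsetP => i; rewrite [in X in X -> _]inE /transfer.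
by case: eqVneq => [->//|_]; case: eqVneq => [->//|_]; rewrite inE.
Qed.

Lemma transfer_rounds x a b : (forall i, 0 <= x i <= 1) -> a != b ->
  a \in fractional x -> b \in fractional x ->
  exists2 t, 0 < t & (forall i, 0 <= transfer x a b t i <= 1) /\
    (#|fractional (transfer x a b t)| < #|fractional x|)%N.
Proof.
move=> x01 ab fa fb.
have /[!inE] /andP[xa0 xa1] := fa; have /[!inE] /andP[xb0 xb1] := fb.
(* the largest transfer keeping both coordinates in [0, 1]: it drives x a to 0 or x b to 1 *)
set t := Num.min (x a) (1 - x b).
have t0 : 0 < t by rewrite lt_min xa0 subr_gt0.
have ta : t <= x a by rewrite ge_min lexx.
have tb : t <= 1 - x b by rewrite ge_min lexx orbT.
exists t => //; split.
  move=> i; rewrite /transfer; case: eqVneq => _; first by lra.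
  by case: eqVneq => _ //; lra.
apply/proper_card/properP; split; first exact: fractional_transfer.
have [le|lt] := leP (x a) (1 - x b); [exists a | exists b] => //.
  by rewrite inE /transfer eqxx /t (min_l le) subrr ltxx.
rewrite inE /transfer eq_sym (negbTE ab) eqxx /t (min_r (ltW lt)).
by rewrite addrC subrK ltxx andbF.
Qed.

Theorem inclusion_law_exists m x : (forall i, 0 <= x i <= 1) ->
  \sum_i x i = m%:R -> exists D, inclusion_law m x D.
Proof.
have [N] := ubnP #|fractional x|; elim: N x => // N IH x fracN x01 xm.
case: (ltngtP #|fractional x| 1) => [frac0|frac_gt1|frac1].
- exists (fun S => (S == [set i | x i == 1])%:R); apply: inclusion_law_boolean => //.
  by apply/eqP; rewrite -cards_eq0; move: frac0; case: #|_|.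
- have [a [b [fa fb ab]]] := card_gt1P frac_gt1.
  have [t t0 [y01 yN]] := transfer_rounds x01 ab fa fb.
  have ba : b != a by rewrite eq_sym.
  have [u u0 [z01 zN]] := transfer_rounds x01 ba fb fa.
  have [Dy Dy_law] : exists Dy, inclusion_law m (transfer x a b t) Dy.
    by apply: IH (leq_trans yN fracN) y01 _; rewrite sum_transfer.
  have [Dz Dz_law] : exists Dz, inclusion_law m (transfer x b a u) Dz.
    by apply: IH (leq_trans zN fracN) z01 _; rewrite sum_transfer.
  eexists; apply: inclusion_law_mix Dy_law Dz_law; last exact: transfer_mix.
  have tu0 : 0 < t + u by rewrite addr_gt0.
  apply/andP; split; first by rewrite divr_ge0 // ltW.
  by rewrite ler_pdivrMr // mul1r lerDr ltW.
- by have := fractional_card_neq1 x01 xm; rewrite frac1.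
Qed.
End InclusionLaw.

Lemma sumr_restrict_pos (R : realDomainType) (I : finType) (F : I -> R) :
  (forall i, 0 <= F i) -> \sum_(i | 0 < F i) F i = \sum_i F i.
Proof.
move=> F0; rewrite [RHS](bigID (fun i => 0 < F i)) /= [X in _ = _ + X]big1 ?addr0 // => i.
by rewrite -leNgt => Fi_le0; apply/le_anti; rewrite Fi_le0 F0.
Qed.

Section Channel.
Variables (R : realType) (n : nat) (Y : finType) (p : 'I_n -> R) (W : Y -> 'I_n -> R).
Hypothesis W_channel : is_channel W.

Lemma out_prob_ge0 y : (forall x, 0 <= p x) -> 0 <= out_prob p W y.
Proof. by move=> p0; apply: sumr_ge0 => x _; rewrite mulr_ge0 ?W_channel.1. Qed.

Lemma sum_out_prob : \sum_y out_prob p W y = \sum_x p x.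
Proof.
rewrite /out_prob exchange_big /=; apply: eq_bigr => x _.
by rewrite -mulr_sumr W_channel.2 mulr1.
Qed.
End Channel.

Section Lemma2.
Variables (R : realType) (n k : nat) (p : 'I_n -> R).
Hypothesis p_pos : forall i, 0 < p i.
Hypothesis p_sum : \sum_(i < n) p i = 1.
Hypothesis p_noninc : forall i j : 'I_n, (i <= j)%N -> p j <= p i.
Hypothesis k_pos : (0 < k)%N.
Hypothesis k_lt_n : (k < n)%N.

Local Notation js := (jstar0 k p).
Local Notation tail := (tailsum p js).
Local Notation m := (k - js)%N.
Local Notation avg := (tail / m%:R).
Local Notation head := [set i : 'I_n | (i < js)%N].
Local Notation prefix := [set i : 'I_n | (i < k)%N].

Lemma p_le_tailsum (j : 'I_n) : p j <= tailsum p j.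
Proof. by rewrite /tailsum (bigD1 j) //= lerDl sumr_ge0 // => i _; apply: ltW. Qed.

(* [find] would return the junk value n if no index satisfied [jcond]; index k - 1 always does. *)
Lemma jcond_jstar0 : exists2 j : 'I_n, val j = js & jcond k p j.
Proof.
have k1n : (k.-1 < n)%N by lia.
have jk1 : jcond k p (Ordinal k1n).
  rewrite /jcond /= (_ : (k - k.-1)%N = 1%N) ?divr1 ?p_le_tailsum ?andbT //; lia.
have has_j : has (jcond k p) (enum 'I_n).
  by apply/hasP; exists (Ordinal k1n); rewrite ?mem_enum.
have js_lt : (js < n)%N by rewrite -[X in (_ < X)%N]size_enum_ord -has_find.
exists (Ordinal js_lt) => //; have := nth_find (Ordinal k1n) has_j.
by rewrite -(nth_ord_enum (Ordinal k1n) (Ordinal js_lt)).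
Qed.

Lemma jstar0_lt_k : (js < k)%N.
Proof. by case: jcond_jstar0 => j <- /andP[]. Qed.

Lemma jstar0_lt_n : (js < n)%N.
Proof. exact: ltn_trans jstar0_lt_k k_lt_n. Qed.

Lemma m_neq0 : (m%:R : R) != 0.
Proof. by rewrite pnatr_eq0 -lt0n subn_gt0 jstar0_lt_k. Qed.

Lemma p_le_avg (i : 'I_n) : (js <= i)%N -> p i <= avg.
Proof.
case: jcond_jstar0 => j jE /andP[_ pj] ji.
by rewrite -jE; apply: le_trans _ pj; apply: p_noninc; rewrite jE.
Qed.

Lemma tail_gt0 : 0 < tail.
Proof.
case: jcond_jstar0 => j <- _; exact: lt_le_trans (p_pos j) (p_le_tailsum j).
Qed.

Lemma avg_gt0 : 0 < avg.
Proof. by rewrite divr_gt0 ?tail_gt0 // ltr0n subn_gt0 jstar0_lt_k. Qed.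

Lemma sum_head : \sum_(i : 'I_n | ~~ (js <= i)%N) p i = 1 - tail.
Proof.
rewrite /tailsum -p_sum [in RHS](bigID (fun i : 'I_n => (js <= i)%N)) /=.
by rewrite addrAC subrr add0r.
Qed.

Lemma card_Mstar M : M \in Mstar k p -> #|M| = k.
Proof. by rewrite inE => /andP[/eqP]. Qed.

Lemma head_subset_Mstar M : M \in Mstar k p -> head \subset M.
Proof. by rewrite inE => /andP[]. Qed.

Lemma card_Mstar_tail M : M \in Mstar k p -> #|M :\: head| = m.
Proof.
move=> MM; have := cardsID head M.
rewrite (setIidPr (head_subset_Mstar MM)) (card_Mstar MM).
rewrite card_ord_lt ?(ltnW jstar0_lt_n) // => Mk.
by apply: (@addnI js); rewrite subnKC // ltnW // jstar0_lt_k.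
Qed.

Lemma sum_tail_mem M : M \in Mstar k p ->
  \sum_(i : 'I_n | (js <= i)%N) ((i \in M)%:R : R) = m%:R.
Proof.
move=> MM; rewrite -(card_Mstar_tail MM) -sum1_card natr_sum.
rewrite big_mkcond [RHS]big_mkcond; apply: eq_bigr => i _.
by rewrite !inE -leqNgt; case: (i \in M); case: (js <= i)%N.
Qed.

Definition marginal (i : 'I_n) : R := if (i < js)%N then 1 else p i / avg.

Lemma marginal_in01 i : 0 <= marginal i <= 1.
Proof.
rewrite /marginal; case: ltnP => [_|ji]; first by rewrite ler01 lexx.
apply/andP; split; first by rewrite divr_ge0 // ltW ?avg_gt0.
by rewrite ler_pdivrMr ?avg_gt0 // mul1r p_le_avg.
Qed.

Lemma sum_marginal : \sum_i marginal i = k%:R.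
Proof.
rewrite (bigID (fun i : 'I_n => (i < js)%N)) /=.
have -> : \sum_(i : 'I_n | (i < js)%N) marginal i = js%:R.
  rewrite (eq_bigr (fun=> 1)) => [|i ilt]; last by rewrite /marginal ilt.
  by rewrite (big_ord_narrow (ltnW jstar0_lt_n)) sumr_const card_ord.
have -> : \sum_(i : 'I_n | ~~ (i < js)%N) marginal i = m%:R.
  rewrite (eq_bigr (fun i => p i / avg)) => [|i ige]; last first.
    by rewrite /marginal (negbTE ige).
  rewrite -mulr_suml (eq_bigl (fun i : 'I_n => (js <= i)%N)) => [|i]; last first.
    by rewrite -leqNgt.
  by rewrite divKf // gt_eqF ?tail_gt0.
by rewrite -natrD subnKC // ltnW // jstar0_lt_k.
Qed.

Lemma lemma2_solution_exists : exists v, lemma2_solution k p v.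
Proof.
have [D law] := inclusion_law_exists marginal_in01 sum_marginal.
have [D0 _ Dmarg Dk] := law.
have D_Mstar M : D M != 0 -> M \in Mstar k p.
  move=> DM; rewrite inE Dk // eqxx; apply/subsetP => i; rewrite inE => ilt.
  by apply: inclusion_law_support law _ DM; rewrite /marginal ilt.
exists (fun M => avg * D M); split => [i ige|M _]; last first.
  by rewrite mulr_ge0 // ltW ?avg_gt0.
rewrite -mulr_sumr (_ : \sum_(M in Mstar k p | i \in M) D M = marginal i).
  by rewrite /marginal ltnNge ige mulrC divfK // gt_eqF ?avg_gt0.
rewrite -Dmarg [RHS](bigID (mem (Mstar k p))) /= [X in _ = _ + X]big1 ?addr0.
  by apply: eq_bigl => M; rewrite andbC.
by move=> M /andP[_ notM]; apply/eqP; apply: contraNT notM; apply: D_Mstar.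
Qed.

Definition posteriorM (M : {set 'I_n}) (i : 'I_n) : R :=
  if (js <= i)%N then (if i \in M then avg else 0) else p i.

Lemma perm_posteriorM_enum M : M \in Mstar k p ->
  perm_eq (map (posteriorM M) (enum M)) (map p (enum head) ++ nseq m avg).
Proof.
move=> MM; apply: perm_trans (perm_map _ (perm_enum_setID M head)) _.
rewrite map_cat (setIidPr (head_subset_Mstar MM)).
have -> : map (posteriorM M) (enum head) = map p (enum head).
  by apply/eq_in_map => i; rewrite mem_enum inE /posteriorM ltnNge => /negbTE ->.
have -> : map (posteriorM M) (enum (M :\: head)) = nseq m avg.
  rewrite -{1}(card_Mstar_tail MM) cardE; apply: map_const_in => i.
  by rewrite mem_enum !inE -leqNgt /posteriorM => /andP[-> ->].
exact: perm_refl.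
Qed.

Lemma pivecE : pivec k p = map (posteriorM prefix) (enum prefix).
Proof.
rewrite /pivec (_ : filter _ _ = enum prefix).
  apply/eq_in_map => i; rewrite mem_enum inE /posteriorM inE ltnNge => ->.
  by case: leqP.
by rewrite enumT; apply: eq_enum => i; rewrite inE.
Qed.

Lemma prefix_in_Mstar : prefix \in Mstar k p.
Proof.
rewrite inE card_ord_lt ?eqxx ?(ltnW k_lt_n) //=.
by apply/subsetP => i; rewrite !inE => /ltn_trans; apply; apply: jstar0_lt_k.
Qed.

Lemma perm_pivec : perm_eq (pivec k p) (map p (enum head) ++ nseq m avg).
Proof. by rewrite pivecE; apply: perm_posteriorM_enum prefix_in_Mstar. Qed.

Lemma perm_posteriorM M : M \in Mstar k p ->
  perm_eq (map (posteriorM M) (enum 'I_n)) (pivec k p ++ nseq (n - k) 0).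
Proof.
move=> MM; apply: perm_trans (perm_map _ (perm_enum_setC M)) _; rewrite map_cat.
apply: perm_cat.
  by rewrite (perm_trans (perm_posteriorM_enum MM)) // perm_sym perm_pivec.
have <- : #|~: M| = (n - k)%N.
  by apply/eqP; rewrite -(eqn_add2l #|M|) cardsC card_ord (card_Mstar MM) subnKC // ltnW.
rewrite cardE (map_const_in (c := 0)) ?perm_refl // => i; rewrite mem_enum inE => iM.
have : i \notin head by apply: contra iM; apply/subsetP/head_subset_Mstar.
by rewrite inE -leqNgt /posteriorM (negbTE iM) => ->.
Qed.

Lemma probvec_pivec : probvec (pivec k p).
Proof.
split=> [x|].
  rewrite (perm_mem perm_pivec) mem_cat mem_nseq.
  by case/orP=> [/mapP[i _ ->]|/andP[_ /eqP ->]]; apply: ltW; rewrite ?avg_gt0.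
rewrite (perm_big _ perm_pivec) big_cat big_map big_enum /= big_nseq iter_addr_0.
rewrite (eq_bigl (fun i : 'I_n => ~~ (js <= i)%N)) => [|i]; last by rewrite inE ltnNge.
by rewrite sum_head -[avg *+ _]mulr_natr divfK ?subrK ?m_neq0.
Qed.

Lemma sum_Mout (G : {set 'I_n} -> R) :
  \sum_(y : Mout k p) G (val y) = \sum_(M in Mstar k p) G M.
Proof. by rewrite [RHS]big_sub. Qed.

Section Solution.
Variable v : {set 'I_n} -> R.
Hypothesis v_sol : lemma2_solution k p v.
Local Notation W := (lemma2_channel k p v).

Lemma sum_v_Mstar : \sum_(M in Mstar k p) v M = avg.
Proof.
apply: (mulIf m_neq0); rewrite divfK ?m_neq0 // mulr_suml.
transitivity (\sum_(M in Mstar k p) \sum_(i : 'I_n | (js <= i)%N) v M * (i \in M)%:R).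
  by apply: eq_bigr => M MM; rewrite -mulr_sumr sum_tail_mem.
rewrite exchange_big /tailsum; apply: eq_bigr => i ige.
rewrite -(v_sol.1 i ige) big_mkcondr /=; apply: eq_bigr => M _.
by case: (i \in M); rewrite ?mulr1 ?mulr0.
Qed.

Lemma lemma2_channel_is_channel : is_channel W.
Proof.
have tail0 := tail_gt0; split=> [y i|i].
  have v0 := v_sol.2 _ (valP y); rewrite /lemma2_channel.
  case: ifP => _; first by case: ifP => _ //; apply: divr_ge0 => //; apply: ltW.
  by apply: divr_ge0; [apply: mulr_ge0 | apply: ltW].
case: (leqP js i) => [ige|ilt].
  transitivity (\sum_(M in Mstar k p) (if i \in M then v M / p i else 0)).
    by rewrite -sum_Mout; apply: eq_bigr => y _; rewrite /lemma2_channel ige.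
  by rewrite -big_mkcondr -mulr_suml (v_sol.1 i ige) divff // gt_eqF.
transitivity (\sum_(M in Mstar k p) v M * m%:R / tail).
  by rewrite -sum_Mout; apply: eq_bigr => y _; rewrite /lemma2_channel leqNgt ilt.
by rewrite -!mulr_suml sum_v_Mstar divfK ?m_neq0 // divff // gt_eqF.
Qed.

Lemma lemma2_channel_feasible : feasible k W.
Proof.
move=> y; rewrite -[X in (_ <= X)%N](card_Mstar (valP y)).
apply/subset_leq_card/subsetP => i.
rewrite inE /lemma2_channel; case: leqP => [_|ilt]; first by case: ifP; rewrite ?ltxx.
by move=> _; apply/(subsetP (head_subset_Mstar (valP y))); rewrite inE.
Qed.

Lemma out_probE y : out_prob p W y = v (val y) / avg.
Proof.
have tail0 := tail_gt0.
rewrite /out_prob (bigID (fun i : 'I_n => (js <= i)%N)) /=.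
rewrite (eq_bigr (fun i => v (val y) * (i \in val y)%:R)) => [|i ige]; last first.
  rewrite /lemma2_channel ige; case: (i \in val y); rewrite ?mulr0 // mulr1.
  by rewrite mulrC divfK // gt_eqF.
rewrite -mulr_sumr sum_tail_mem ?(valP y) //.
rewrite (eq_bigr (fun i => p i * (v (val y) * m%:R / tail))) => [|i ilt]; last first.
  by rewrite /lemma2_channel (negbTE ilt).
rewrite -mulr_suml sum_head; field.
by rewrite m_neq0 gt_eqF.
Qed.

Lemma posteriorE y : 0 < out_prob p W y ->
  posterior p W y = map (posteriorM (val y)) (enum 'I_n).
Proof.
have tail0 := tail_gt0; rewrite out_probE => out_gt0.
have vy0 : v (val y) != 0 by apply: contraTneq out_gt0 => ->; rewrite mul0r ltxx.
rewrite /posterior out_probE; apply: eq_map => i; rewrite /lemma2_channel /posteriorM.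
case: leqP => _; last by field; rewrite vy0 m_neq0 gt_eqF.
case: (i \in val y); last by rewrite mulr0 mul0r.
by field; rewrite vy0 m_neq0 !gt_eqF.
Qed.

Lemma cond_entropy_lemma2_channel eta F : gen_entropy eta F ->
  cond_entropy eta F p W = entropy eta F (pivec k p).
Proof.
move=> [_ F_perm F_exp _]; rewrite /cond_entropy /entropy; congr eta.
have pi_pv := probvec_pivec.
transitivity (\sum_(y | 0 < out_prob p W y) out_prob p W y * F (pivec k p)).
  apply: eq_bigr => y out_gt0; rewrite posteriorE //; congr (_ * _).
  rewrite -(F_exp _ (n - k)%N pi_pv); symmetry.
  apply: F_perm (probvec_cat_nseq0 _ pi_pv) _.
  by rewrite perm_sym (perm_posteriorM (valP y)).
have W_ch := lemma2_channel_is_channel.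
rewrite -mulr_suml sumr_restrict_pos => [|y]; last first.
  by apply: out_prob_ge0 => // i; apply: ltW.
by rewrite sum_out_prob // p_sum mul1r.
Qed.

End Solution.

End Lemma2.

Theorem lemma2 (R : realType) (n k : nat) (p : 'I_n -> R)
    (p_pos : forall i, 0 < p i)
    (p_sum : \sum_(i < n) p i = 1)
    (p_noninc : forall i j : 'I_n, (i <= j)%N -> p j <= p i)
    (k_pos : (0 < k)%N) (k_lt_n : (k < n)%N) :
  (exists v : {set 'I_n} -> R, lemma2_solution k p v) /\
  (forall v : {set 'I_n} -> R, lemma2_solution k p v ->
     [/\ is_channel (lemma2_channel k p v),
         feasible k (lemma2_channel k p v) &
         forall (eta : R -> R) (F : seq R -> R), gen_entropy eta F ->
           cond_entropy eta F p (lemma2_channel k p v) = entropy eta F (pivec k p)]).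
Proof.
split=> [|v v_sol]; first by apply: lemma2_solution_exists.
split.
- by apply: lemma2_channel_is_channel.
- by apply: lemma2_channel_feasible.
- by move=> eta F; apply: cond_entropy_lemma2_channel.
Qed.
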